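(* In the setting of the context, let $f(x)=\sum_{i=1}^mf_i(x)$. If $\frac12(\underline C+\underline C^\top)$ is positive semidefinite, then $f$ is convex on $\mathbb{R}^m$.
   Context: There are $m$ players with decisions $x_i\in\mathbb{R}$, $x=(x_1,\dots,x_m)\in\mathbb{R}^m$. Data: $a_i\ge0$, $b_i\in\mathbb{R}$, $c_{ij}\in\mathbb{R}$ ($i\ne j$), $c_i^{\mathrm{up}}>0$, $X_i=[0,c_i^{\mathrm{up}}]$, $\eta>0$; $\mathrm{dist}(x_i,X_i)$ is the distance from $x_i$ to $X_i$. $f_i(x)=\frac12a_ix_i^2+b_ix_i+\big(\sum_{j\ne i}c_{ij}x_j\big)x_i+\frac1{2\eta}\mathrm{dist}^2(x_i,X_i)$. $\underline C\in\mathbb{R}^{m\times m}$ has $\underline C_{ii}=\frac12a_i$ and $\underline C_{ij}=c_{ij}$ for $i\ne j$. *)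

From HB Require Import structures.
From mathcomp Require Import all_boot all_order all_algebra.
From mathcomp Require Import classical_sets boolp reals.
Set Implicit Arguments. Unset Strict Implicit. Unset Printing Implicit Defensive.
Import Order.TTheory GRing.Theory Num.Theory.
Local Open Scope classical_set_scope.
Local Open Scope ring_scope.

Definition dist {R : realType} (t : R) (X : set R) : R :=
  inf [set `|t - y| | y in X].

Definition Xbox {R : realType} (cup : R) : set R := [set y | 0 <= y <= cup].

Definition fi {R : realType} {m : nat} (a b cup : 'I_m -> R) (c : 'I_m -> 'I_m -> R)
  (eta : R) (i : 'I_m) (x : 'cV[R]_m) : R :=
  (1/2) * a i * (x i 0) ^+ 2 + b i * x i 0
  + (\sum_(j < m | j != i) c i j * x j 0) * x i 0
  + (1 / (2 * eta)) * (dist (x i 0) (Xbox (cup i))) ^+ 2.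

Definition fsum {R : realType} {m : nat} (a b cup : 'I_m -> R) (c : 'I_m -> 'I_m -> R)
  (eta : R) (x : 'cV[R]_m) : R :=
  \sum_(i < m) fi a b cup c eta i x.

Definition Cunder {R : realType} {m : nat} (a : 'I_m -> R) (c : 'I_m -> 'I_m -> R)
  : 'M[R]_m :=
  \matrix_(i, j) (if i == j then (1/2) * a i else c i j).

Definition psd {R : realType} {m : nat} (S : 'M[R]_m) : Prop :=
  forall v : 'cV[R]_m, 0 <= (v^T *m S *m v) 0 0.

Definition convex_on_Rm {R : realType} {m : nat} (g : 'cV[R]_m -> R) : Prop :=
  forall (x y : 'cV[R]_m) (t : R), 0 <= t <= 1 ->
    g (t *: x + (1 - t) *: y) <= t * g x + (1 - t) * g y.

From mathcomp Require Import all_boot all_order all_algebra.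
From mathcomp Require Import classical_sets boolp reals.
From mathcomp Require Import ring lra.
Import Order.TTheory GRing.Theory Num.Theory.
Local Open Scope ring_scope.

(* The sum of the costs is the quadratic form of [Cunder a c], plus a linear
   term, plus the penalties [(1 / (2 eta)) dist(x_i, [0, c_i^up])^2]. A quadratic
   form is convex as soon as its matrix, equivalently its symmetric part, is
   PSD. The distance to an interval is a maximum of affine functions, hence
   convex and nonnegative, so its square is convex too. *)

Section RealConvexity.
Variable R : realType.

Definition convex_real (g : R -> R) : Prop :=
  forall s1 s2 t : R, 0 <= t <= 1 ->
    g (t * s1 + (1 - t) * s2) <= t * g s1 + (1 - t) * g s2.

Lemma affine_convex_real (g : R -> R) (p q : R) :
  (forall s, g s = p * s + q) -> convex_real g.
Proof. by move=> gE s1 s2 t _; rewrite !gE; nra. Qed.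

Lemma convex_real_max (f g : R -> R) :
  convex_real f -> convex_real g -> convex_real (fun s => Num.max (f s) (g s)).
Proof.
move=> cf cg s1 s2 t t01; have /andP[t0 t1] := t01.
have u0 : 0 <= 1 - t by lra.
have maxl (u v : R) : u <= Num.max u v by rewrite le_max lexx.
have maxr (u v : R) : v <= Num.max u v by rewrite le_max lexx orbT.
rewrite ge_max; apply/andP; split.
- by apply: le_trans (cf s1 s2 t t01) _; rewrite lerD ?ler_wpM2l.
- by apply: le_trans (cg s1 s2 t t01) _; rewrite lerD ?ler_wpM2l.
Qed.

Lemma sqr_convex_comb (s1 s2 t : R) : 0 <= t <= 1 ->
  (t * s1 + (1 - t) * s2) ^+ 2 <= t * s1 ^+ 2 + (1 - t) * s2 ^+ 2.
Proof.
move=> /andP[t0 t1]; rewrite -subr_ge0.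
have -> : t * s1 ^+ 2 + (1 - t) * s2 ^+ 2 - (t * s1 + (1 - t) * s2) ^+ 2
  = t * (1 - t) * (s1 - s2) ^+ 2 by ring.
by rewrite mulr_ge0 ?sqr_ge0 // mulr_ge0 // subr_ge0.
Qed.

(* [x ^+ 2] is convex, and nondecreasing on the nonnegative values of [g]. *)
Lemma convex_real_sqr (g : R -> R) : (forall s, 0 <= g s) ->
  convex_real g -> convex_real (fun s => g s ^+ 2).
Proof.
move=> g_ge0 cg s1 s2 t t01; have /andP[t0 t1] := t01.
apply: le_trans _ (sqr_convex_comb (g s1) (g s2) t t01).
have comb_ge0 : 0 <= t * g s1 + (1 - t) * g s2.
  by rewrite addr_ge0 // mulr_ge0 // subr_ge0.
by rewrite ler_sqr ?nnegrE //; apply: cg.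
Qed.

End RealConvexity.
Arguments convex_real {R} g.

Section BoxDistance.
Variable R : realType.

Definition box_gap (c s : R) : R := Num.max (Num.max (- s) (s - c)) 0.

Lemma box_gap_ge0 (c s : R) : 0 <= box_gap c s.
Proof. by rewrite /box_gap le_max lexx orbT. Qed.

Lemma convex_box_gap (c : R) : convex_real (box_gap c).
Proof.
apply: convex_real_max; last by apply: (@affine_convex_real _ _ 0 0) => s; ring.
apply: convex_real_max.
- by apply: (@affine_convex_real _ _ (-1) 0) => s; ring.
- by apply: (@affine_convex_real _ _ 1 (- c)) => s; ring.
Qed.

(* The infimum is attained at the projection of [s] onto [0, c]. *)
Lemma dist_Xbox (c s : R) : 0 <= c -> dist s (Xbox c) = box_gap c s.
Proof.
move=> c0; rewrite /dist.
have gap_lb : lbound [set `|s - y| | y in Xbox c] (box_gap c s).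
  move=> _ [y /andP[y0 yc] <-]; rewrite /box_gap !ge_max normr_ge0 andbT.
  by rewrite !ler_normr; apply/andP; split; apply/orP; [right | left]; lra.
set y := Num.min (Num.max s 0) c.
have Xy : Xbox c y by rewrite /Xbox /= /y ge_min le_min le_max lexx orbT c0 lexx orbT.
have gapE : `|s - y| = box_gap c s.
  rewrite /y /box_gap; case: (leP s 0) => s0.
    rewrite (min_l c0) subr0 (ler0_norm s0).
    by rewrite (@max_l _ _ (- s)) ?max_l; lra.
  case: (leP s c) => sc.
    rewrite subrr normr0 max_r // ge_max; apply/andP; split; lra.
  rewrite gtr0_norm ?subr_gt0 //.
  by rewrite (@max_r _ _ (- s)) ?max_l; lra.
apply/eqP; rewrite eq_le lb_le_inf ?andbT; last exact: gap_lb.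
  by rewrite -gapE; apply: ge_inf; [exists 0 => _ [z _ <-] | exists y].
by exists `|s - y|, y.
Qed.

End BoxDistance.
Arguments box_gap {R} c s.

Section ConvexRm.
Variables (R : realType) (m : nat).
Implicit Types (f g : 'cV[R]_m -> R).

Lemma convex_on_RmD f g :
  convex_on_Rm f -> convex_on_Rm g -> convex_on_Rm (fun x => f x + g x).
Proof.
move=> cf cg x y t t01.
have -> : t * (f x + g x) + (1 - t) * (f y + g y)
  = (t * f x + (1 - t) * f y) + (t * g x + (1 - t) * g y) by ring.
by apply: lerD; [apply: cf | apply: cg].
Qed.

Lemma convex_on_Rm_sum (I : Type) (r : seq I) (P : pred I) (F : I -> 'cV[R]_m -> R) :
  (forall i, P i -> convex_on_Rm (F i)) ->
  convex_on_Rm (fun x => \sum_(i <- r | P i) F i x).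
Proof.
move=> cF x y t t01; rewrite !mulr_sumr -big_split /=.
by apply: ler_sum => i Pi; apply: cF.
Qed.

Lemma convex_on_RmZ (k : R) f :
  0 <= k -> convex_on_Rm f -> convex_on_Rm (fun x => k * f x).
Proof.
move=> k0 cf x y t t01.
have -> : t * (k * f x) + (1 - t) * (k * f y) = k * (t * f x + (1 - t) * f y) by ring.
by apply: ler_wpM2l => //; apply: cf.
Qed.

Lemma convex_on_Rm_coord (g : R -> R) (i : 'I_m) :
  convex_real g -> convex_on_Rm (fun x => g (x i 0)).
Proof. by move=> cg x y t t01; rewrite !mxE; apply: cg. Qed.

Definition qform (A : 'M[R]_m) (x : 'cV[R]_m) : R := (x^T *m A *m x) 0 0.

Lemma mxbilinE (A : 'M[R]_m) (u v : 'cV[R]_m) :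
  (u^T *m A *m v) 0 0 = \sum_(i < m) \sum_(j < m) u i 0 * A i j * v j 0.
Proof.
rewrite mxE exchange_big; apply: eq_bigr => j _.
by rewrite mxE mulr_suml; apply: eq_bigr => i _; rewrite mxE.
Qed.

Lemma qform_convex_defect (A : 'M[R]_m) (x y : 'cV[R]_m) (t : R) :
  t * qform A x + (1 - t) * qform A y - qform A (t *: x + (1 - t) *: y)
  = t * (1 - t) * qform A (x - y).
Proof.
rewrite /qform !mxbilinE !mulr_sumr -big_split -sumrB; apply: eq_bigr => i _ /=.
rewrite !mulr_sumr -big_split -sumrB; apply: eq_bigr => j _ /=.
by rewrite !mxE; ring.
Qed.

Lemma convex_qform (A : 'M[R]_m) : psd A -> convex_on_Rm (qform A).
Proof.
move=> psdA x y t /andP[t0 t1]; rewrite -subr_ge0 qform_convex_defect.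
by rewrite mulr_ge0 ?mulr_ge0 ?subr_ge0 //; apply: psdA.
Qed.

Lemma psd_symmetric_part (A : 'M[R]_m) : psd ((1/2) *: (A + A^T)) -> psd A.
Proof.
move=> psdS v; have := psdS v.
have trE : (v^T *m A^T *m v) 0 0 = qform A v.
  have -> : v^T *m A^T *m v = (v^T *m A *m v)^T by rewrite !trmx_mul trmxK mulmxA.
  by rewrite mxE.
have -> : (v^T *m ((1/2) *: (A + A^T)) *m v) 0 0
    = (1/2) * (qform A v + (v^T *m A^T *m v) 0 0).
  by rewrite -scalemxAr -scalemxAl mulmxDr mulmxDl mxE [X in _ * X]mxE.
by rewrite trE -/(qform A v) => psdSv; lra.
Qed.

End ConvexRm.
Arguments qform {R m} A x.

Section Game.
Variables (R : realType) (m : nat) (a b cup : 'I_m -> R).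
Variables (c : 'I_m -> 'I_m -> R) (eta : R).

Lemma qform_Cunder (x : 'cV[R]_m) :
  qform (Cunder a c) x = \sum_(i < m)
    ((1/2) * a i * x i 0 ^+ 2 + (\sum_(j < m | j != i) c i j * x j 0) * x i 0).
Proof.
rewrite /qform mxbilinE; apply: eq_bigr => i _.
rewrite (bigD1 i) //= !mxE eqxx mulr_suml; congr (_ + _); first ring.
by apply: eq_bigr => j ji; rewrite !mxE eq_sym (negbTE ji); ring.
Qed.

Lemma fsumE : (forall i, 0 <= cup i) ->
  fsum a b cup c eta = fun x => qform (Cunder a c) x + \sum_(i < m) b i * x i 0
    + \sum_(i < m) (1 / (2 * eta)) * box_gap (cup i) (x i 0) ^+ 2.
Proof.
move=> cup0; apply/funext => x.
rewrite /fsum qform_Cunder -!big_split; apply: eq_bigr => i _ /=.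
by rewrite /fi dist_Xbox //; ring.
Qed.

End Game.

Theorem lemma10 (R : realType) (m : nat) (a b cup : 'I_m -> R)
  (c : 'I_m -> 'I_m -> R) (eta : R)
  (ha : forall i, 0 <= a i) (hcup : forall i, 0 < cup i) (heta : 0 < eta) :
  psd ((1/2) *: (Cunder a c + (Cunder a c)^T)) ->
  convex_on_Rm (fsum a b cup c eta).
Proof.
move=> psdS; rewrite fsumE => [|i]; last exact: ltW.
apply: convex_on_RmD; first apply: convex_on_RmD.
- exact/convex_qform/psd_symmetric_part.
- apply: convex_on_Rm_sum => i _; apply: convex_on_Rm_coord.
  by apply: (@affine_convex_real _ _ (b i) 0) => s; ring.
- apply: convex_on_Rm_sum => i _; apply: convex_on_RmZ.
    by rewrite divr_ge0 // mulr_ge0 // ltW.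
  apply: (@convex_on_Rm_coord _ _ (fun s => box_gap (cup i) s ^+ 2)).
  exact/convex_real_sqr/convex_box_gap/box_gap_ge0.
Qed.
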